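(* Let $\mathcal{C}$ be a small category and let $M,N$ be $k\mathcal{C}$-modules such that $\partial_0^*M\cong\partial_1^*N$ as $k\widetilde{\mathcal{E}}^{\mathcal{C}}_1$-modules, or such that $\partial_0^*M\cong\partial_1^*N$ as $k\widetilde{\mathcal{G}}^{\mathcal{C}}_1$-modules. Then $M$ and $N$ are locally constant.
   Context: A $k\mathcal{C}$-module is a functor to finite-dimensional $k$-vector spaces ($k$ a field); it is locally constant if it sends every morphism to an isomorphism; $F^*M=M\circ F$. $\widetilde{\mathcal{E}}^{\mathcal{C}}_1$ is the category whose objects are all morphisms $u:a\to b$ of $\mathcal{C}$ and whose morphisms $[u]\to[v]$ are commutative squares $(f_0,f_1)$ with $f_1u=vf_0$. $\widetilde{\mathcal{G}}^{\mathcal{C}}_1$ is its subcategory with the same objects whose morphisms $[u]\to[v]$ ($v:c\to d$) are the identities and the pairs $(w\circ u,\;v\circ w)$ for $w:b\to c$. In both, $\partial_0[u]=b$, $\partial_0(f_0,f_1)=f_1$, $\partial_1[u]=a$, $\partial_1(f_0,f_1)=f_0$. *)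

From mathcomp Require Import all_boot all_algebra.

Set Implicit Arguments.
Unset Strict Implicit.
Unset Printing Implicit Defensive.

Local Open Scope ring_scope.

Record category := Category {
  Ob : Type;
  Hom : Ob -> Ob -> Type;
  idm : forall a, Hom a a;
  comp : forall a b c, Hom b c -> Hom a b -> Hom a c;
  comp_id_l : forall a b (f : Hom a b), comp (idm b) f = f;
  comp_id_r : forall a b (f : Hom a b), comp f (idm a) = f;
  comp_assoc : forall a b c d (h : Hom c d) (g : Hom b c) (f : Hom a b),
      comp h (comp g f) = comp (comp h g) f
}.
Arguments idm {C} a : rename.
Arguments comp {C a b c} g f : rename.

(* Underlying quiver (objects and morphisms): the only data needed to speak
   of representations, pullbacks and natural isomorphisms. *)
Record quiver := Quiver { qOb : Type; qHom : qOb -> qOb -> Type }.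
Arguments qHom {q} x y : rename.
Definition quiver_of (C : category) : quiver := @Quiver (Ob C) (@Hom C).

(* A representation: to each object a space k^(rdim x); to each morphism
   f : x -> y a matrix acting on ROW vectors  v |-> v *m ract f. *)
Record rep (k : fieldType) (Q : quiver) := Rep {
  rdim : qOb Q -> nat;
  ract : forall x y, qHom x y -> 'M[k]_(rdim x, rdim y)
}.
Arguments ract {k Q} r {x y} f : rename.

Definition invertible_mx (k : fieldType) m n (A : 'M[k]_(m, n)) : Prop :=
  exists B : 'M[k]_(n, m), A *m B = 1%:M /\ B *m A = 1%:M.

(* kC-module = functor C -> finite-dimensional k-vector spaces *)
Definition is_module (k : fieldType) (C : category) (M : rep k (quiver_of C)) : Prop :=
  (forall a : Ob C, ract M (idm a) = 1%:M) /\
  (forall (a b c : Ob C) (g : Hom b c) (f : Hom a b),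
      ract M (comp g f) = ract M f *m ract M g).

Definition locally_constant (k : fieldType) (C : category) (M : rep k (quiver_of C)) : Prop :=
  forall (a b : Ob C) (f : Hom a b), invertible_mx (ract M f).

Definition rep_iso (k : fieldType) (Q : quiver) (M N : rep k Q) : Prop :=
  exists eta : forall x : qOb Q, 'M[k]_(rdim M x, rdim N x),
    (forall x, invertible_mx (eta x)) /\
    (forall (x y : qOb Q) (f : qHom x y), ract M f *m eta y = eta x *m ract N f).

(* maps of quivers (underlying data of functors) and pullback F^* M = M o F *)
Record qmorph (P Q : quiver) := QMorph {
  qmap_ob : qOb P -> qOb Q;
  qmap_hom : forall x y, qHom x y -> qHom (qmap_ob x) (qmap_ob y)
}.
Arguments qmap_hom {P Q} F {x y} f : rename.

Definition pullback (k : fieldType) (P Q : quiver) (F : qmorph P Q) (M : rep k Q) : rep k P :=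
  @Rep k P (fun x => rdim M (qmap_ob F x)) (fun x y f => ract M (qmap_hom F f)).

Record arrow (C : category) := Arrow { asrc : Ob C; atgt : Ob C; arr : Hom asrc atgt }.
Arguments asrc {C} u : rename.
Arguments atgt {C} u : rename.
Arguments arr {C} u : rename.

Definition square_pair (C : category) (u v : arrow C) : Type :=
  (Hom (asrc u) (asrc v) * Hom (atgt u) (atgt v))%type.

Definition EHom (C : category) (u v : arrow C) : Type :=
  { p : square_pair u v | comp p.2 (arr u) = comp (arr v) p.1 }.

Definition Etilde (C : category) : quiver := @Quiver (arrow C) (@EHom C).

(* (f0,f1) : [u] -> [v] is in G~ iff it is the identity of [u] (so [v] = [u]),
   or it is (w o u, v o w) for some w : b -> c. *)
Definition Gpred (C : category) (u v : arrow C) (p : square_pair u v) : Prop :=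
  existT (fun v' => square_pair u v') v p = existT (fun v' => square_pair u v') u (idm _, idm _)
  \/ exists w : Hom (atgt u) (asrc v), p = (comp w (arr u), comp (arr v) w).

Definition GHom (C : category) (u v : arrow C) : Type :=
  { p : EHom u v | Gpred (proj1_sig p) }.

Definition Gtilde (C : category) : quiver := @Quiver (arrow C) (@GHom C).

Definition d0E (C : category) : qmorph (Etilde C) (quiver_of C) :=
  @QMorph (Etilde C) (quiver_of C) (fun u => atgt u) (fun u v p => (proj1_sig p).2).
Definition d1E (C : category) : qmorph (Etilde C) (quiver_of C) :=
  @QMorph (Etilde C) (quiver_of C) (fun u => asrc u) (fun u v p => (proj1_sig p).1).
Definition d0G (C : category) : qmorph (Gtilde C) (quiver_of C) :=
  @QMorph (Gtilde C) (quiver_of C) (fun u => atgt u) (fun u v p => (proj1_sig (proj1_sig p)).2).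
Definition d1G (C : category) : qmorph (Gtilde C) (quiver_of C) :=
  @QMorph (Gtilde C) (quiver_of C) (fun u => asrc u) (fun u v p => (proj1_sig (proj1_sig p)).1).

From Pilot Require Import Defs.
From mathcomp Require Import all_boot all_algebra.

(* Only the squares (w u, v w) induced by a morphism w : b -> c are used, and
   these lie in both E~ and G~.  Naturality of eta : d0^* M ~ d1^* N at the
   square [f] -> [id_b] given by w = id_b reads eta_[id_b] = eta_[f] N(f), and
   at the square [id_a] -> [f] given by w = id_a it reads
   M(f) eta_[f] = eta_[id_a].  As all components of eta are invertible, so are
   N(f) and M(f). *)

Set Implicit Arguments.
Unset Strict Implicit.
Unset Printing Implicit Defensive.

Local Open Scope ring_scope.

Section InvertibleMx.

Variable k : fieldType.

Lemma invertible_mxM m n p (A : 'M[k]_(m, n)) (B : 'M[k]_(n, p)) :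
  invertible_mx A -> invertible_mx B -> invertible_mx (A *m B).
Proof.
move=> [A' [AA' A'A]] [B' [BB' B'B]]; exists (B' *m A'); split.
- by rewrite mulmxA -(mulmxA A) BB' mulmx1 AA'.
- by rewrite mulmxA -(mulmxA B') A'A mulmx1 B'B.
Qed.

Lemma invertible_mx_mulr_cancel m n p (A : 'M[k]_(m, n)) (B : 'M[k]_(n, p))
    (AB : 'M[k]_(m, p)) :
  A *m B = AB -> invertible_mx B -> invertible_mx AB -> invertible_mx A.
Proof.
move=> defAB [B' [BB' B'B]] invAB.
have -> : A = AB *m B' by rewrite -defAB -mulmxA BB' mulmx1.
by apply: invertible_mxM invAB _; exists B.
Qed.

Lemma invertible_mx_mull_cancel m n p (A : 'M[k]_(m, n)) (B : 'M[k]_(n, p))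
    (AB : 'M[k]_(m, p)) :
  A *m B = AB -> invertible_mx A -> invertible_mx AB -> invertible_mx B.
Proof.
move=> defAB [A' [AA' A'A]] invAB.
have -> : B = A' *m AB by rewrite -defAB mulmxA A'A mul1mx.
by apply: invertible_mxM invAB; exists A.
Qed.

End InvertibleMx.

(* [Defs.Hom] and [Defs.comp] are qualified since MathComp's [Hom] (vector.v)
   and [comp] (ssrfun.v) shadow them. *)
Section FactorSquares.

Variable C : category.

Lemma factor_square_commutes (u v : arrow C) (w : Defs.Hom (atgt u) (asrc v)) :
  Defs.comp (Defs.comp (arr v) w) (arr u) = Defs.comp (arr v) (Defs.comp w (arr u)).
Proof. by rewrite comp_assoc. Qed.

Definition factor_square (u v : arrow C) (w : Defs.Hom (atgt u) (asrc v)) :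
    EHom u v :=
  exist _ (Defs.comp w (arr u), Defs.comp (arr v) w) (factor_square_commutes w).

Definition factor_squareG (u v : arrow C) (w : Defs.Hom (atgt u) (asrc v)) :
    GHom u v :=
  exist _ (factor_square w) (or_intror (ex_intro _ w erefl)).

End FactorSquares.

Section FactorNatural.

Variables (k : fieldType) (C : category) (M N : rep k (quiver_of C)).

Definition factor_natural
    (eta : forall u : arrow C, 'M[k]_(rdim M (atgt u), rdim N (asrc u))) :=
  forall (u v : arrow C) (w : Defs.Hom (atgt u) (asrc v)),
    ract M (Defs.comp (arr v) w) *m eta v = eta u *m ract N (Defs.comp w (arr u)).

Lemma factor_natural_isoE :
  rep_iso (pullback (d0E C) M) (pullback (d1E C) N) ->
  exists2 eta, (forall u, invertible_mx (eta u)) & factor_natural eta.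
Proof.
move=> [eta [inv_eta nat_eta]]; exists eta => // u v w.
exact: (nat_eta u v (factor_square w)).
Qed.

Lemma factor_natural_isoG :
  rep_iso (pullback (d0G C) M) (pullback (d1G C) N) ->
  exists2 eta, (forall u, invertible_mx (eta u)) & factor_natural eta.
Proof.
move=> [eta [inv_eta nat_eta]]; exists eta => // u v w.
exact: (nat_eta u v (factor_squareG w)).
Qed.

Hypothesis M_id : forall a : Ob C, ract M (idm a) = 1%:M.
Hypothesis N_id : forall a : Ob C, ract N (idm a) = 1%:M.

Variable eta : forall u : arrow C, 'M[k]_(rdim M (atgt u), rdim N (asrc u)).
Hypothesis inv_eta : forall u, invertible_mx (eta u).
Hypothesis nat_eta : factor_natural eta.

Lemma factor_natural_locally_constantM : locally_constant M.
Proof.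
move=> a b f.
apply: (invertible_mx_mulr_cancel _ (inv_eta (Arrow f)) (inv_eta (Arrow (idm a)))).
have := @nat_eta (Arrow (idm a)) (Arrow f) (idm a).
by rewrite /= comp_id_r comp_id_l N_id mulmx1.
Qed.

Lemma factor_natural_locally_constantN : locally_constant N.
Proof.
move=> a b f.
apply: (invertible_mx_mull_cancel _ (inv_eta (Arrow f)) (inv_eta (Arrow (idm b)))).
have := @nat_eta (Arrow f) (Arrow (idm b)) (idm b).
by rewrite /= comp_id_r comp_id_l M_id mul1mx => ->.
Qed.

End FactorNatural.

Theorem lemma3p9 (k : fieldType) (C : category) (M N : rep k (quiver_of C)) :
  is_module M -> is_module N ->
  (rep_iso (pullback (d0E C) M) (pullback (d1E C) N) \/
   rep_iso (pullback (d0G C) M) (pullback (d1G C) N)) ->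
  locally_constant M /\ locally_constant N.
Proof.
move=> [M_id _] [N_id _] iso.
have [eta inv_eta nat_eta] :
    exists2 eta : forall u : arrow C, 'M[k]_(rdim M (atgt u), rdim N (asrc u)),
      (forall u, invertible_mx (eta u)) & factor_natural eta.
  by case: iso => iso; [exact: factor_natural_isoE | exact: factor_natural_isoG].
split.
- exact: (factor_natural_locally_constantM N_id inv_eta nat_eta).
- exact: (factor_natural_locally_constantN M_id inv_eta nat_eta).
Qed.
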